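(* Let $V$ be a finite-dimensional real vector space of even dimension, $\omega_0$ a non-degenerate alternating two-form on $V$, and $\omega_1$ any alternating two-form on $V$. If the set $\mathcal{J}_\tau(\omega_0,\omega_1)$ of complex structures $J$ on $V$ which are tamed by $\omega_0$ and tamed by $\omega_1$ is non-empty, then it is contractible.
   Context: $J$ is tamed by $\omega_0$ if $\omega_0(v,Jv)>0$ for all $v\ne0$. $J$ is tamed by $\omega_1$ if $\omega_1(v,Jv)\ge 0$ for all $v\in V$, with equality if and only if $v\in\ker\omega_1=\{v:\iota_v\omega_1=0\}$. The set is topologized as a subset of $\mathrm{End}(V)$. *)

From HB Require Import structures.
From mathcomp Require Import all_boot all_order all_algebra.
From mathcomp Require Import all_classical all_reals all_analysis.
Set Implicit Arguments. Unset Strict Implicit. Unset Printing Implicit Defensive.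
Import Order.TTheory GRing.Theory Num.Theory.
Import numFieldNormedType.Exports.
Local Open Scope classical_set_scope.
Local Open Scope ring_scope.

(* V = 'rV[R]_n (row vectors); an endomorphism of V is a matrix J acting by
   v |-> v *m J; a (real) bilinear form on V is given by its Gram matrix W via
   form W u v = u W v^T. *)
Definition form (R : realType) (n : nat) (W : 'M[R]_n) (u v : 'rV[R]_n) : R :=
  (u *m W *m v^T) ord0 ord0.

Definition alternating_form (R : realType) (n : nat) (W : 'M[R]_n) : Prop :=
  forall v : 'rV[R]_n, form W v v = 0.

Definition nondegenerate_form (R : realType) (n : nat) (W : 'M[R]_n) : Prop :=
  forall u : 'rV[R]_n, (forall v, form W u v = 0) -> u = 0.

Definition kerform (R : realType) (n : nat) (W : 'M[R]_n) : set 'rV[R]_n :=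
  [set u | forall v, form W u v = 0].

Definition complex_structure (R : realType) (n : nat) (J : 'M[R]_n) : Prop :=
  J *m J = - 1%:M.

Definition tamed_nondeg (R : realType) (n : nat) (W : 'M[R]_n) (J : 'M[R]_n) : Prop :=
  forall v : 'rV[R]_n, v != 0 -> 0 < form W v (v *m J).

Definition tamed_deg (R : realType) (n : nat) (W : 'M[R]_n) (J : 'M[R]_n) : Prop :=
  forall v : 'rV[R]_n,
    0 <= form W v (v *m J) /\ (form W v (v *m J) = 0 <-> kerform W v).

Definition Jtau (R : realType) (n : nat) (W0 W1 : 'M[R]_n) : set 'M[R]_n :=
  [set J | complex_structure J /\ tamed_nondeg W0 J /\ tamed_deg W1 J].

Definition contractible (R : realType) (T : topologicalType) (A : set T) : Prop :=
  exists2 x0 : T, A x0 &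
  exists (H : (R * T)%type -> T),
    [/\ {within [set` `[0%R, 1%R]] `*` A, continuous H},
        (forall t x, [set` `[0%R, 1%R]] t -> A x -> A (H (t, x))),
        (forall x, A x -> H (0%R, x) = x) &
        (forall x, A x -> H (1%R, x) = x0)].

(* Fix K in Jtau W0 W1.  For J in Jtau W0 W1 and 0 <= t <= 1 put P_t := 1 - t J K and
   u := w - w J K; then for every vector w and every alternating W
     W(w P_t, w J P_t) = (1 - t^2) W(w, w J) + t (1 - t) (W(w, w K) + W(w J, w J K))
                         + t^2 W(u, u K),
   a combination with non-negative coefficients of quantities that taming by W controls.
   Hence P_t is invertible and J_t := P_t^-1 J P_t, which satisfies v J_t = w J P_t for
   v = w P_t, is again tamed by W0 and W1.  Moreover J_0 = J and J P_1 = P_1 K, so J_1 = K,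
   and (t, J) |-> J_t is continuous because matrix inversion is: it contracts Jtau W0 W1
   onto K. *)

From Pilot Require Import Defs.
From HB Require Import structures.
From mathcomp Require Import all_boot all_order all_algebra.
From mathcomp Require Import all_classical all_reals all_analysis.
From mathcomp Require Import ring lra.
Set Implicit Arguments. Unset Strict Implicit. Unset Printing Implicit Defensive.
Import Order.TTheory GRing.Theory Num.Theory.
Import numFieldNormedType.Exports.
Local Open Scope classical_set_scope.
Local Open Scope ring_scope.

(* mathcomp's sesquilinear.v exports another [form]. *)
Local Notation form := Defs.form.

Section matrix_cvg.
Context {R : numFieldType} {T : Type} (F : set_system T) {FF : Filter F}.

Lemma cvg_mxP m n (f : T -> 'M[R]_(m, n)) (A : 'M[R]_(m, n)) :
  f @ F --> A <-> forall i j, (fun x => f x i j) @ F --> A i j.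
Proof.
split=> [fA i j|fA].
  exact: (continuous_cvg _ (@coord_continuous R m n i j A) fA).
apply/cvg_mx_entourageP => E entE.
apply: filter_forall => i; apply: filter_forall => j.
have fAE := (cvg_entourageP _ _).1 (fA i j) E entE.
near=> x; rewrite inE; near: x; exact: fAE.
Unshelve. all: by end_near.
Qed.

Lemma cvg_mulmx m n p (f : T -> 'M[R]_(m, n)) (g : T -> 'M[R]_(n, p))
    (A : 'M[R]_(m, n)) (B : 'M[R]_(n, p)) :
  f @ F --> A -> g @ F --> B -> (fun x => f x *m g x) @ F --> A *m B.
Proof.
move=> /cvg_mxP fA /cvg_mxP gB; apply/cvg_mxP => i j.
rewrite mxE; under eq_cvg do rewrite mxE.
by apply: cvg_big => [|k _]; [exact: add_continuous | exact: cvgM].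
Qed.

Lemma cvg_det m (f : T -> 'M[R]_m) (A : 'M[R]_m) :
  f @ F --> A -> (fun x => \det (f x)) @ F --> \det A.
Proof.
move=> /cvg_mxP fA; apply: cvg_big => [|s _]; first exact: add_continuous.
by apply: cvgMl_tmp; apply: cvg_big => [|i _]; [exact: mul_continuous | exact: fA].
Qed.

Lemma cvg_adj m (f : T -> 'M[R]_m) (A : 'M[R]_m) :
  f @ F --> A -> (fun x => \adj (f x)) @ F --> \adj A.
Proof.
move=> /cvg_mxP fA; apply/cvg_mxP => i j.
rewrite mxE; under eq_cvg do rewrite mxE.
apply: cvgMl_tmp; apply: cvg_det; apply/cvg_mxP => k l.
by rewrite !mxE; under eq_cvg do rewrite !mxE; exact: fA.
Qed.

Lemma cvg_invmx m (f : T -> 'M[R]_m) (A : 'M[R]_m) : A \in unitmx ->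
  f @ F --> A -> (fun x => invmx (f x)) @ F --> invmx A.
Proof.
rewrite unitmxE unitfE => detA0 fA.
have detf := cvg_det fA.
rewrite /invmx unitmxE unitfE detA0.
apply: (@cvg_trans _ (((\det (f x))^-1 *: \adj (f x)) @[x --> F])).
  apply: near_eq_cvg; near=> x.
  have detfx0 : \det (f x) != 0 by near: x; exact: cvgr_neq0 detf detA0.
  by rewrite unitmxE unitfE detfx0.
by apply: cvgZ; [exact: cvgV | exact: cvg_adj].
Unshelve. all: by end_near.
Qed.

End matrix_cvg.

Section bilinear_form.
Variables (R : realType) (n : nat).
Implicit Types (W J : 'M[R]_n) (u v w : 'rV[R]_n).

Lemma formDl W u v w : form W (u + v) w = form W u w + form W v w.
Proof. by rewrite /form !mulmxDl mxE. Qed.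

Lemma formDr W u v w : form W u (v + w) = form W u v + form W u w.
Proof. by rewrite /form linearD /= mulmxDr mxE. Qed.

Lemma formZl W (a : R) u v : form W (a *: u) v = a * form W u v.
Proof. by rewrite /form -!scalemxAl mxE. Qed.

Lemma formZr W (a : R) u v : form W u (a *: v) = a * form W u v.
Proof. by rewrite /form linearZ /= -scalemxAr mxE. Qed.

Lemma formNl W u v : form W (- u) v = - form W u v.
Proof. by rewrite -scaleN1r formZl mulN1r. Qed.

Lemma formNr W u v : form W u (- v) = - form W u v.
Proof. by rewrite -scaleN1r formZr mulN1r. Qed.

Lemma form0l W v : form W 0 v = 0.
Proof. by rewrite /form !mul0mx mxE. Qed.

Lemma form0r W v : form W v 0 = 0.
Proof. by rewrite /form trmx0 mulmx0 mxE. Qed.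

Lemma alternating_formN W u v : alternating_form W -> form W u v = - form W v u.
Proof.
move=> altW; apply/eqP; rewrite -addr_eq0.
by have := altW (u + v); rewrite formDl !formDr !altW add0r addr0 => ->.
Qed.

Lemma tamed_nondeg_ge0 W J : tamed_nondeg W J -> forall v, 0 <= form W v (v *m J).
Proof. by move=> tJ v; have [->|/tJ/ltW//] := eqVneq v 0; rewrite form0l. Qed.

End bilinear_form.

Section deformation.
Variables (R : realType) (n : nat) (J K : 'M[R]_n).
Hypotheses (csJ : complex_structure J) (csK : complex_structure K).
Implicit Types (W : 'M[R]_n) (t : R) (v w : 'rV[R]_n).

Definition deform_mx t : 'M[R]_n := 1%:M - t *: (J *m K).

Definition cs_deform t : 'M[R]_n := invmx (deform_mx t) *m J *m deform_mx t.

Lemma cs_deform0 : cs_deform 0 = J.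
Proof. by rewrite /cs_deform /deform_mx scale0r subr0 invmx1 mul1mx mulmx1. Qed.

Lemma mulmx_deform_mx w t :
  w *m deform_mx t = w - t *: (w *m J *m K).
Proof. by rewrite /deform_mx mulmxBr mulmx1 -scalemxAr mulmxA. Qed.

Lemma mulmx_cs_deform_mx w t :
  w *m J *m deform_mx t = w *m J + t *: (w *m K).
Proof.
by rewrite mulmx_deform_mx -(mulmxA w J J) csJ mulmxN mulmx1 mulNmx scalerN opprK.
Qed.

Lemma deform_mx1_intertwines : J *m deform_mx 1 = deform_mx 1 *m K.
Proof.
rewrite /deform_mx scale1r mulmxBr mulmxBl mulmx1 mul1mx mulmxA csJ.
by rewrite -[J *m K *m K]mulmxA csK mulNmx mul1mx mulmxN mulmx1 !opprK addrC.
Qed.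

Lemma cs_deform1 : deform_mx 1 \in unitmx -> cs_deform 1 = K.
Proof. by move=> unitP; rewrite /cs_deform -mulmxA deform_mx1_intertwines mulKmx. Qed.

Lemma mulmx_cs_diff w : (w - w *m J *m K) *m K = w *m K + w *m J.
Proof. by rewrite mulmxBl -[w *m J *m K *m K]mulmxA csK mulmxN mulmx1 opprK. Qed.

Lemma form_deform_mx W w t : alternating_form W ->
  let u := w - w *m J *m K in
  form W (w *m deform_mx t) (w *m J *m deform_mx t) =
    (1 - t ^+ 2) * form W w (w *m J)
    + t * (1 - t) * (form W w (w *m K) + form W (w *m J) (w *m J *m K))
    + t ^+ 2 * form W u (u *m K).
Proof.
move=> altW u.
rewrite mulmx_cs_diff mulmx_cs_deform_mx mulmx_deform_mx /u.
rewrite !(formDl, formDr, formNl, formNr, formZl, formZr).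
rewrite (alternating_formN (w *m J *m K) (w *m J) altW).
ring.
Qed.

Lemma form_deform_mx_gt0 W t w :
  alternating_form W -> tamed_nondeg W J -> tamed_nondeg W K -> 0 <= t <= 1 ->
  w != 0 -> 0 < form W (w *m deform_mx t) (w *m J *m deform_mx t).
Proof.
move=> altW tJ tK /andP[t0 t1] w0; rewrite form_deform_mx //=.
set u := w - w *m J *m K.
have qJw := tJ w w0.
have qKw := tK w w0.
have qKwJ := tamed_nondeg_ge0 tK (w *m J).
have u0 : u != 0.
  apply/eqP => u0; have := congr1 (form W w) (mulmx_cs_diff w).
  rewrite -/u u0 mul0mx form0r formDr; lra.
have qKu := tK u u0.
have cross : 0 <= t * (1 - t) * (form W w (w *m K) + form W (w *m J) (w *m J *m K)).
  by apply: mulr_ge0; [apply: mulr_ge0|]; lra.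
have [t_lt1|t_ge1] := ltP t 1.
  have : 0 < (1 - t ^+ 2) * form W w (w *m J) by apply: mulr_gt0 => //; nra.
  have : 0 <= t ^+ 2 * form W u (u *m K) by apply: mulr_ge0; [exact: sqr_ge0 | exact: ltW].
  lra.
have -> : t = 1 by apply: le_anti; rewrite t1 t_ge1.
by rewrite expr1n subrr !(mul0r, mulr0, add0r, mul1r).
Qed.

Lemma form_deform_mx_tamed_deg W t w :
  alternating_form W -> tamed_deg W J -> tamed_deg W K -> 0 <= t <= 1 ->
  0 <= form W (w *m deform_mx t) (w *m J *m deform_mx t) /\
  (form W (w *m deform_mx t) (w *m J *m deform_mx t) = 0 ->
   kerform W (w *m deform_mx t)).
Proof.
move=> altW tJ tK /andP[t0 t1]; rewrite form_deform_mx //=.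
set u := w - w *m J *m K.
have [qJw [kerw _]] := tJ w; have [qKw _] := tK w; have [qKwJ _] := tK (w *m J).
have [qKu [keru _]] := tK u.
have cross : 0 <= t * (1 - t) * (form W w (w *m K) + form W (w *m J) (w *m J *m K)).
  by apply: mulr_ge0; [apply: mulr_ge0|]; lra.
have : 0 <= (1 - t ^+ 2) * form W w (w *m J) by apply: mulr_ge0 => //; nra.
have : 0 <= t ^+ 2 * form W u (u *m K) by apply: mulr_ge0 => //; exact: sqr_ge0.
move=> ge0_u ge0_w; split=> [|sum0]; first lra.
have /eqP : (1 - t ^+ 2) * form W w (w *m J) = 0 by lra.
rewrite mulf_eq0 => /orP[|/eqP/kerw wker]; last first.
  have /eqP : t ^+ 2 * form W u (u *m K) = 0 by lra.
  rewrite mulf_eq0 sqrf_eq0 => /orP[/eqP->|/eqP/keru uker].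
    by rewrite mulmx_deform_mx scale0r subr0.
  have -> : w *m deform_mx t = (1 - t) *: w + t *: u.
    by rewrite mulmx_deform_mx /u scalerBl scale1r scalerBr addrA subrK.
  by move=> x; rewrite formDl !formZl wker uker !mulr0 addr0.
rewrite subr_eq0 eq_sym sqrf_eq1 => /orP[/eqP t_eq1|/eqP t_eqN1]; last lra.
have -> : w *m deform_mx t = u by rewrite mulmx_deform_mx t_eq1 scale1r.
have /eqP : t ^+ 2 * form W u (u *m K) = 0 by lra.
by rewrite t_eq1 expr1n mul1r => /eqP/keru.
Qed.

Lemma deform_mx_unit W t :
  alternating_form W -> tamed_nondeg W J -> tamed_nondeg W K -> 0 <= t <= 1 ->
  deform_mx t \in unitmx.
Proof.
move=> altW tJ tK t01; rewrite -row_free_unit; apply: inj_row_free => w wP0.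
apply/eqP/negPn/negP => w0.
by have := form_deform_mx_gt0 altW tJ tK t01 w0; rewrite wP0 form0l ltxx.
Qed.

Lemma cs_deform_cs t : deform_mx t \in unitmx -> complex_structure (cs_deform t).
Proof.
move=> unitP; rewrite /complex_structure /cs_deform !mulmxA mulmxK //.
by rewrite -(mulmxA _ J J) csJ mulmxN mulmx1 mulNmx mulVmx.
Qed.

Lemma mulmx_cs_deform v t :
  v *m cs_deform t = v *m invmx (deform_mx t) *m J *m deform_mx t.
Proof. by rewrite /cs_deform !mulmxA. Qed.

Lemma cs_deform_tamed_nondeg W t :
  alternating_form W -> tamed_nondeg W J -> tamed_nondeg W K -> 0 <= t <= 1 ->
  tamed_nondeg W (cs_deform t).
Proof.
move=> altW tJ tK t01 v v0.
have unitP := deform_mx_unit altW tJ tK t01.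
set w := v *m invmx (deform_mx t).
have vE : v = w *m deform_mx t by rewrite mulmxKV.
rewrite mulmx_cs_deform -/w {1}vE; apply: form_deform_mx_gt0 => //.
by apply: contra_neq v0 => w0; rewrite vE w0 mul0mx.
Qed.

Lemma cs_deform_tamed_deg W t :
  alternating_form W -> tamed_deg W J -> tamed_deg W K -> 0 <= t <= 1 ->
  deform_mx t \in unitmx -> tamed_deg W (cs_deform t).
Proof.
move=> altW tJ tK t01 unitP v.
set w := v *m invmx (deform_mx t).
have vE : v = w *m deform_mx t by rewrite mulmxKV.
rewrite mulmx_cs_deform -/w vE.
have [ge0 eq0_ker] := form_deform_mx_tamed_deg w altW tJ tK t01.
by do 2?split => //; apply.
Qed.

End deformation.

Lemma cs_deform_Jtau (R : realType) n (W0 W1 J K : 'M[R]_n) t :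
  alternating_form W0 -> alternating_form W1 -> Jtau W0 W1 J -> Jtau W0 W1 K ->
  0 <= t <= 1 -> Jtau W0 W1 (cs_deform J K t).
Proof.
move=> altW0 altW1 [csJ [tJ0 tJ1]] [csK [tK0 tK1]] t01.
have unitP := deform_mx_unit csJ csK altW0 tJ0 tK0 t01.
split; first exact: cs_deform_cs.
split; first exact: cs_deform_tamed_nondeg.
exact: cs_deform_tamed_deg.
Qed.

Lemma cs_deform_continuous (R : realType) n (J K : 'M[R]_n) t :
  deform_mx J K t \in unitmx ->
  {for (t, J), continuous (fun x : R * 'M[R]_n => cs_deform x.2 K x.1)}.
Proof.
move=> unitP.
have cvgP : (fun x : R * 'M[R]_n => deform_mx x.2 K x.1) @ (t, J) --> deform_mx J K t.
  apply: cvgB; first exact: cvg_cst.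
  by apply: cvgZ; [exact: cvg_fst | apply: cvg_mulmx; [exact: cvg_snd | exact: cvg_cst]].
rewrite /prop_for /continuous_at /cs_deform /=.
exact: cvg_mulmx (cvg_mulmx (cvg_invmx unitP cvgP) cvg_snd) cvgP.
Qed.

Theorem lemmaA1 (R : realType) (n : nat) (W0 W1 : 'M[R]_n) :
  ~~ odd n ->
  alternating_form W0 -> nondegenerate_form W0 ->
  alternating_form W1 ->
  Jtau W0 W1 !=set0 ->
  contractible R (Jtau W0 W1).
Proof.
(* Parity of n and non-degeneracy of W0 already follow from Jtau W0 W1 being nonempty. *)
move=> _ altW0 _ altW1 [K JtauK]; exists K => //.
have [csK [tK0 _]] := JtauK.
have unitP (J : 'M[R]_n) (t : R) :
    Jtau W0 W1 J -> 0 <= t <= 1 -> deform_mx J K t \in unitmx.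
  by move=> [csJ [tJ0 _]] t01; exact (deform_mx_unit csJ csK altW0 tJ0 tK0 t01).
exists (fun x => cs_deform x.2 K x.1); split.
- apply: continuous_in_subspaceT => -[t J]; rewrite inE /= in_itv => -[t01 JtauJ].
  exact/cs_deform_continuous/unitP.
- by move=> t J; rewrite /= in_itv => t01 JtauJ; exact: cs_deform_Jtau.
- by move=> J _; exact: cs_deform0.
- move=> J JtauJ; have [csJ _] := JtauJ.
  by apply: cs_deform1 csJ csK _; apply: unitP; rewrite // ler01 lexx.
Qed.
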